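(* Let $k$ be an algebraically closed field of characteristic zero, let $A$ be a cosemisimple Hopf algebra over $k$ with Haar measure $h$ and antipode $S$, and let $V$ be a finite-dimensional irreducible (simple) $A$-comodule. Then: (1) If $V$ is not self-dual (i.e. $V$ is not isomorphic to its dual comodule $V^*$), then $\nu_2(V) = 0$. (2) Suppose $V$ is self-dual, let $\beta : V \otimes V \to k$ be a non-degenerate $A$-colinear bilinear form, and let $E$ be the matrix of $\beta$ in some basis of $V$. Then $$\nu_2(V) = \frac{\dim(V)}{\mathrm{tr}(E\,({}^t\!E)^{-1})}.$$ (3) Suppose $V$ is self-dual and $S^2 = \mathrm{id}$. Then $\nu_2(V) = \pm 1$; moreover $\nu_2(V) = 1$ corresponds to the existence of an $A$-colinear symmetric non-degenerate bilinear form on $V$, and $\nu_2(V) = -1$ corresponds to the existence of an $A$-colinear skew-symmetric non-degenerate bilinear form on $V$.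
   Context: A Hopf algebra $A$ is cosemisimple if every $A$-comodule is a direct sum of simple comodules; such an $A$ has a unique Haar measure, i.e. a linear form $h : A \to k$ with $h(1)=1$ and $(\mathrm{id}\otimes h)\Delta = h(\cdot)1 = (h \otimes \mathrm{id})\Delta$. For a finite-dimensional right $A$-comodule $V$ with basis $e_1,\dots,e_n$ and coaction $e_j \mapsto \sum_i e_i \otimes a_{ij}$, the elements $a_{ij}\in A$ are the matrix coefficients; the character of $V$ is $\chi_V = \sum_i a_{ii}$ (the image of $\mathrm{id}_V$ under the coalgebra map $V^*\otimes V \to A$). The Schur indicator of $V$ is $\nu_2(V) := h(\chi_{V(1)}\chi_{V(2)})$, where $\Delta(\chi_V) = \chi_{V(1)}\otimes\chi_{V(2)}$ in Sweedler notation; equivalently $\nu_2(V) = \sum_{i,j} h(a_{ji}a_{ij})$. A bilinear form $\beta: V\otimes V \to k$ is $A$-colinear if it is a morphism of $A$-comodules, where $V\otimes V$ carries the tensor product coaction and $k$ the trivial coaction $1\mapsto 1\otimes 1$. *)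

(* Hopf algebras over a field, encoded honestly:
   - A is a k-algebra (algType k);
   - an element of A (x) A is represented by a finite formal sum
     [seq (x_i, y_i)] meaning  sum_i x_i (x) y_i ; two such formal sums denote
     the same tensor iff all pairings with (f (x) g), f g linear forms on A,
     agree (linear forms f (x) g separate the points of A (x) A over a field).
   - the comultiplication is a map Delta : A -> seq (A * A). *)
From HB Require Import structures.
From mathcomp Require Import all_boot all_order all_algebra.
Set Implicit Arguments. Unset Strict Implicit. Unset Printing Implicit Defensive.
Import GRing.Theory.
Local Open Scope ring_scope.

Section HopfDefs.
Variable k : fieldType.
Variable A : algType k.

Definition lin_form (f : A -> k) : Prop :=
  forall (c : k) (x y : A), f (c *: x + y) = c * f x + f y.

Definition lin_endo (S : A -> A) : Prop :=
  forall (c : k) (x y : A), S (c *: x + y) = c *: S x + S y.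

Definition pair2 (f g : A -> k) (t : seq (A * A)) : k :=
  \sum_(p <- t) f p.1 * g p.2.

Definition is_hopf (D : A -> seq (A * A)) (eps : A -> k) (S : A -> A) : Prop :=
  [/\
    forall f g, lin_form f -> lin_form g -> forall c x y,
      pair2 f g (D (c *: x + y)) = c * pair2 f g (D x) + pair2 f g (D y),
  (* coassociativity: (Delta (x) id) Delta = (id (x) Delta) Delta *)
    forall f g l, lin_form f -> lin_form g -> lin_form l -> forall x,
      \sum_(p <- D x) pair2 f g (D p.1) * l p.2
      = \sum_(p <- D x) f p.1 * pair2 g l (D p.2),
    forall f g, lin_form f -> lin_form g ->
      (forall x y, pair2 f g (D (x * y)) =
         \sum_(p <- D x) \sum_(q <- D y) f (p.1 * q.1) * g (p.2 * q.2))
      /\ pair2 f g (D 1) = f 1 * g 1,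
    [/\ lin_form eps, eps 1 = 1, (forall x y, eps (x * y) = eps x * eps y) &
        forall x, \sum_(p <- D x) eps p.1 *: p.2 = x
               /\ \sum_(p <- D x) eps p.2 *: p.1 = x] &
    lin_endo S /\
    forall x, \sum_(p <- D x) S p.1 * p.2 = (eps x)%:A
           /\ \sum_(p <- D x) p.1 * S p.2 = (eps x)%:A].

(* matrix coefficients of a right comodule structure on k^n with basis
   e_1..e_n and coaction e_j |-> sum_i e_i (x) a_ij :
   Delta(a_ij) = sum_l a_il (x) a_lj  and eps(a_ij) = delta_ij *)
Definition comatrix (D : A -> seq (A * A)) (eps : A -> k) n (a : 'M[A]_n) : Prop :=
  (forall f g, lin_form f -> lin_form g -> forall i j,
     pair2 f g (D (a i j)) = \sum_l f (a i l) * g (a l j))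
  /\ (forall i j, eps (a i j) = (i == j)%:R).

(* the subspace of k^n spanned by the rows of U (row coordinate vectors)
   is a subcomodule: rho(U) is contained in U (x) A, i.e. U is stable under
   (id (x) f) rho for every linear form f *)
Definition subcomod n (a : 'M[A]_n) (U : 'M[k]_n) : Prop :=
  forall f : A -> k, lin_form f -> stablemx U (map_mx f a)^T.

Definition simple_comod n (a : 'M[A]_n) : Prop :=
  (0 < n)%N /\
  forall U : 'M[k]_n, subcomod a U -> (U == (0 : 'M[k]_n))%MS || (U == 1%:M)%MS.

Definition cosemisimple (D : A -> seq (A * A)) (eps : A -> k) : Prop :=
  forall n (a : 'M[A]_n), comatrix D eps a ->
  forall U : 'M[k]_n, subcomod a U ->
  exists W : 'M[k]_n, subcomod a W /\ (U + W == 1%:M)%MS /\ (U :&: W == (0 : 'M[k]_n))%MS.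

Definition haar (D : A -> seq (A * A)) (h : A -> k) : Prop :=
  [/\ lin_form h, h 1 = 1 &
      forall x, \sum_(p <- D x) h p.2 *: p.1 = (h x)%:A
             /\ \sum_(p <- D x) h p.1 *: p.2 = (h x)%:A].

Definition scal_mx n m (E : 'M[k]_(n, m)) : 'M[A]_(n, m) := map_mx (fun c => c%:A) E.

(* dual comodule V^*: matrix coefficients S(a_ji) in the dual basis *)
Definition dual_comatrix (S : A -> A) n (a : 'M[A]_n) : 'M[A]_n :=
  \matrix_(i, j) S (a j i).

Definition comod_iso n (a b : 'M[A]_n) : Prop :=
  exists F : 'M[k]_n, F \in unitmx /\ b *m scal_mx F = scal_mx F *m a.

Definition self_dual (S : A -> A) n (a : 'M[A]_n) : Prop :=
  comod_iso a (dual_comatrix S a).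

(* the bilinear form with matrix E (beta(e_i,e_j) = E_ij) is A-colinear:
   sum_{k,l} E_kl a_ki a_lj = E_ij 1 *)
Definition colinear_form n (a : 'M[A]_n) (E : 'M[k]_n) : Prop :=
  a^T *m scal_mx E *m a = scal_mx E.

Definition nu2 (h : A -> k) n (a : 'M[A]_n) : k :=
  \sum_(i < n) \sum_(j < n) h (a j i * a i j).

End HopfDefs.

(* The Haar measure turns matrix coefficients into comodule maps: the matrices
   W_ij = (h (a_ri a_sj))_rs satisfy a W_ij a^T = W_ij, so W_ij^T intertwines V with
   its dual V^*, and Schur's lemma forces W_ij = 0 unless V is self-dual.  If E is the
   matrix of a nondegenerate colinear form, then W_ij E commutes with the coaction,
   hence W_ij = c_ij E^-1, and applying h to a^T E a = E gives
   c_ij = E_ij / tr (E (E^T)^-1); summing W_ij j i yields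
   nu_2(V) = dim V / tr (E (E^T)^-1).  When S^2 = id, both E and E^T give
   isomorphisms V ~ V^*, so E^T = c E with c = +-1, and then nu_2(V) = c.
   Elements of A (x) A are only known through their pairings with f (x) g; since
   linear forms separate the points of A (by Zorn's lemma), these pairings determine
   the value of every bilinear map on a formal tensor, which is what lets the Hopf
   axioms be applied to expressions such as S(x_1) x_2 or h(x_2) x_1. *)

From HB Require Import structures.
From mathcomp Require Import all_boot all_order all_algebra.
From mathcomp Require Import boolp classical_sets.
Import GRing.Theory.
Local Open Scope ring_scope.
Set Implicit Arguments. Unset Strict Implicit. Unset Printing Implicit Defensive.

Local Notation bilin B := (bilinear_for *:%R *:%R B).

Section LinearMaps.
Variables (k : fieldType) (U W : lmodType k) (F : U -> W).
Hypothesis linF : linear F.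

Let FL : {linear U -> W} := HB.pack F (GRing.isLinear.Build _ _ _ _ F linF).

Lemma lin0 : F 0 = 0. Proof. exact: (raddf0 FL). Qed.
Lemma linD x y : F (x + y) = F x + F y. Proof. exact: (raddfD FL). Qed.
Lemma linB x y : F (x - y) = F x - F y. Proof. exact: (raddfB FL). Qed.
Lemma linN x : F (- x) = - F x. Proof. exact: (raddfN FL). Qed.
Lemma linZ c x : F (c *: x) = c *: F x. Proof. by rewrite -[c *: x]addr0 linF lin0 addr0. Qed.
Lemma lin_sum I (r : seq I) (G : I -> U) :
  F (\sum_(i <- r) G i) = \sum_(i <- r) F (G i).
Proof. exact: (raddf_sum FL). Qed.

End LinearMaps.

Section SeparatingForm.
Local Open Scope classical_set_scope.
Variables (k : fieldType) (V : lmodType k).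

Definition subspace_set (U : set V) := forall c u v, U u -> U v -> U (c *: u + v).

Lemma hyperplane_compl_line (x : V) : x != 0 ->
  exists M, [/\ subspace_set M, ~ M x & forall y, exists c, M (y - c *: x)].
Proof.
move=> x0.
have [M [[subM Mx] maxM]] : exists M, (subspace_set M /\ ~ M x) /\
    forall N, M `<` N -> ~ (subspace_set N /\ ~ N x).
  apply: Zorn_bigcup => F FP Ftot; split.
  - move=> c u v [U FU Uu] [U' FU' U'v].
    have [UU'|U'U] := Ftot U U' FU FU'.
    + by exists U' => //; apply: (FP U' FU').1 (UU' u Uu) U'v.
    + by exists U => //; apply: (FP U FU).1 Uu (U'U v U'v).
  - by move=> [U FU Ux]; apply: (FP U FU).2.
have M0 : M 0.
  have [[u Mu]|M_empty] := pselect (exists u, M u).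
    by have := subM (-1) u u Mu Mu; rewrite scaleN1r addNr.
  have sub0 : subspace_set [set 0] by move=> c u v -> ->; rewrite scaler0 addr0.
  apply: contrapT => nM0; apply: (maxM [set 0]); last first.
    by split=> // x_eq0; rewrite x_eq0 eqxx in x0.
  by split=> [u Mu|/(_ 0 erefl)//]; case: M_empty; exists u.
exists M; split=> // y.
have [[c [u [Mu xE]]]|Nx] := pselect (exists c u, M u /\ x = u + c *: y).
  have c0 : c != 0 by apply: contra_notN Mx => /eqP c0; rewrite xE c0 scale0r addr0.
  exists c^-1; suff -> : y - c^-1 *: x = - c^-1 *: u + 0 by exact: subM.
  by rewrite addr0 xE scalerDr scalerA mulVf // scale1r opprD addrCA subrr addr0 scaleNr.
pose N y' := exists c u, M u /\ y' = u + c *: y.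
have subN : subspace_set N.
  move=> c' _ _ [d [u [Mu ->]]] [d' [v [Mv ->]]]; exists (c' * d + d'), (c' *: u + v).
  by split; [exact: subM|rewrite scalerDr scalerA addrACA scalerDl].
have MN : M `<=` N by move=> u Mu; exists 0, u; rewrite scale0r addr0.
have NM : N `<=` M.
  apply: contrapT => nNM; apply: (maxM N); first by split.
  by split=> // -[c [u [Mu xE]]]; apply: Nx; exists c, u.
by exists 0; rewrite scale0r subr0; apply: NM; exists 1, 0; rewrite scale1r add0r.
Qed.

Lemma separating_form (x : V) : x != 0 -> exists f : V -> k, scalar f /\ f x = 1.
Proof.
move=> /hyperplane_compl_line [M [subM Mx coordM]].
have [f Mf] := choice coordM.
have M0 : M 0.
  by have [c Mc] := coordM 0; have := subM (-1) _ _ Mc Mc; rewrite scaleN1r addNr.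
have coord_uniq y c : M (y - c *: x) -> f y = c.
  move=> My; apply: contrapT => fy_c; apply: Mx.
  have Md : M ((f y - c) *: x).
    suff <- : -1 *: (y - f y *: x) + (y - c *: x) = (f y - c) *: x by exact: subM.
    by rewrite scaleN1r opprB addrA subrK scalerBl.
  suff <- : (f y - c)^-1 *: ((f y - c) *: x) + 0 = x by exact: subM.
  by rewrite addr0 scalerA mulVf ?scale1r // subr_eq0; apply/eqP.
exists f; split=> [a u v|]; last by apply: coord_uniq; rewrite scale1r subrr.
apply: coord_uniq.
suff -> : a *: u + v - (a * f u + f v) *: x = a *: (u - f u *: x) + (v - f v *: x).
  exact: subM.
by rewrite scalerDl -scalerA scalerBr opprD addrACA.
Qed.

Lemma forms_vanish_eq0 (x : V) : (forall f : V -> k, scalar f -> f x = 0) -> x = 0.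
Proof.
move=> fx0; apply/eqP; apply: contraT => /separating_form [f [lf fx1]].
by move: (fx0 f lf); rewrite fx1 => /eqP; rewrite oner_eq0.
Qed.

End SeparatingForm.

Section FormalTensors.
Variables (k : fieldType) (A : algType k).

Lemma lin_form0 (f : A -> k) : lin_form f -> f 0 = 0.
Proof. by move=> lf; exact: (lin0 (lf : linear (f : A -> k^o))). Qed.
Lemma lin_formD (f : A -> k) x y : lin_form f -> f (x + y) = f x + f y.
Proof. by move=> lf; exact: (linD (lf : linear (f : A -> k^o))). Qed.
Lemma lin_formZ (f : A -> k) c x : lin_form f -> f (c *: x) = c * f x.
Proof. by move=> lf; exact: (linZ (lf : linear (f : A -> k^o))). Qed.
Lemma lin_form_sum (f : A -> k) I (r : seq I) (G : I -> A) : lin_form f ->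
  f (\sum_(i <- r) G i) = \sum_(i <- r) f (G i).
Proof. by move=> lf; exact: (lin_sum (lf : linear (f : A -> k^o))). Qed.

Definition tensor_eval (W : lmodType k) (B : A -> A -> W) (t : seq (A * A)) : W :=
  \sum_(p <- t) B p.1 p.2.

Lemma bilinear_pair (f g : A -> k) : lin_form f -> lin_form g ->
  bilin (fun u v => f u * g v : k^o).
Proof.
move=> lf lg; split=> [v|u] c x y /=.
  by rewrite lf mulrDl -mulrA.
have -> : g (c *: x + y) = c * g x + g y by exact: lg.
by rewrite mulrDr mulrCA.
Qed.

Lemma tensor_eval_shift (W : lmodType k) (B : A -> A -> W) (g : A -> k) x y r :
  bilin B ->
  tensor_eval B ((x, y) :: r) = B (x + \sum_(p <- r) g p.2 *: p.1) y
     + tensor_eval B [seq (p.1, p.2 - g p.2 *: y) | p <- r].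
Proof.
move=> [linBl linBr]; rewrite /tensor_eval big_cons big_map.
rewrite (linD (linBl y)) (lin_sum (linBl y)) -addrA -big_split /=.
congr (_ + _); apply: eq_bigr => p _.
by rewrite (linZ (linBl y)) (linB (linBr _)) (linZ (linBr _)) addrC subrK.
Qed.

(* Induction on the length: if y <> 0, pick g with g y = 1; the vanishing pairings
   force x = - \sum g(q.2) q.1, and the first term is absorbed into the others. *)
Lemma tensor_eval_eq0 (W : lmodType k) (B : A -> A -> W) t : bilin B ->
  (forall f g, lin_form f -> lin_form g -> pair2 f g t = 0) -> tensor_eval B t = 0.
Proof.
move=> bB; move: {2}(size t) (leqnn (size t)) => m.
elim: m t => [|m IH] [|[x y] r] //= size_r t0; try by rewrite /tensor_eval big_nil.
have [y0|nz_y] := eqVneq y 0.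
  rewrite /tensor_eval big_cons /= y0 (lin0 (bB.2 x)) add0r; apply: IH => // f g lf lg.
  by have := t0 f g lf lg; rewrite /pair2 big_cons /= y0 lin_form0 // mulr0 add0r.
have [g [lg gy]] := separating_form nz_y.
have sum0 : x + \sum_(p <- r) g p.2 *: p.1 = 0.
  apply: forms_vanish_eq0 => f lf.
  rewrite lin_formD // lin_form_sum // -[RHS](t0 f g lf lg) /pair2 big_cons /= gy mulr1.
  by congr (_ + _); apply: eq_bigr => p _; rewrite lin_formZ // mulrC.
have shift (W' : lmodType k) (B' : A -> A -> W') : bilin B' ->
    tensor_eval B' ((x, y) :: r) = tensor_eval B' [seq (p.1, p.2 - g p.2 *: y) | p <- r].
  by move=> bB'; rewrite (tensor_eval_shift g) // sum0 (lin0 (bB'.1 y)) add0r.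
rewrite shift //; apply: IH => [|f g' lf lg']; first by rewrite size_map.
transitivity (pair2 f g' ((x, y) :: r)); last exact: t0.
exact/esym/(shift _ _ (bilinear_pair lf lg')).
Qed.

Lemma tensor_eval_ext (W : lmodType k) (B : A -> A -> W) t t' : bilin B ->
  (forall f g, lin_form f -> lin_form g -> pair2 f g t = pair2 f g t') ->
  tensor_eval B t = tensor_eval B t'.
Proof.
move=> bB tt'; apply/eqP; rewrite -subr_eq0; apply/eqP.
pose w := t ++ [seq (- p.1, p.2) | p <- t'].
have eval_w (W' : lmodType k) (B' : A -> A -> W') : bilin B' ->
    tensor_eval B' w = tensor_eval B' t - tensor_eval B' t'.
  move=> bB'; rewrite /tensor_eval big_cat big_map -sumrN; congr (_ + _).
  by apply: eq_bigr => p _; rewrite /= (linN (bB'.1 p.2)).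
rewrite -eval_w //; apply: tensor_eval_eq0 => // f g lf lg.
transitivity (pair2 f g t - pair2 f g t').
  exact: (eval_w _ _ (bilinear_pair lf lg)).
by rewrite tt' // subrr.
Qed.

End FormalTensors.

Section Bilinear.
Variables (k : fieldType) (A : algType k) (W : lmodType k).

Lemma bilinear_premul (B : A -> A -> W) x y :
  bilin B -> bilin (fun u v => B (x * u) (y * v)).
Proof.
move=> [linBl linBr]; split=> [v|u] c u1 u2 /=; rewrite mulrDr -scalerAr.
  exact: linBl.
exact: linBr.
Qed.

Lemma bilinear_postmul (B : A -> A -> W) x y :
  bilin B -> bilin (fun u v => B (u * x) (v * y)).
Proof.
move=> [linBl linBr]; split=> [v|u] c u1 u2 /=; rewrite mulrDl -scalerAl.
  exact: linBl.
exact: linBr.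
Qed.

Lemma bilinear_linear_mul (T : A -> A) : linear T -> bilin (fun u v => T u * v).
Proof.
move=> linT; split=> [v|u] c u1 u2 /=; last by rewrite mulrDr scalerAr.
by rewrite (linD linT) (linZ linT) mulrDl scalerAl.
Qed.

Lemma bilinear_scale_form (f : A -> k) : lin_form f -> bilin (fun u v : A => f v *: u).
Proof.
move=> lf; split=> [v|u] c u1 u2 /=; first by rewrite scalerDr !scalerA mulrC.
by rewrite lf scalerDl scalerA.
Qed.

End Bilinear.

Section ScalarMatrices.
Variables (k : fieldType) (A : algType k).
Local Notation sc := (scal_mx A).

Lemma scal_mxM m p q (X : 'M[k]_(m, p)) (Y : 'M[k]_(p, q)) : sc (X *m Y) = sc X *m sc Y.
Proof. exact: (map_mxM (in_alg A)). Qed.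

Lemma scal_mx1 p : sc (1%:M : 'M[k]_p) = 1%:M.
Proof. by rewrite /scal_mx (map_scalar_mx (in_alg A)) rmorph1. Qed.

Lemma trmx_mul_scalr m p q (X : 'M[A]_(m, p)) (G : 'M[k]_(p, q)) :
  (X *m sc G)^T = sc G^T *m X^T.
Proof.
apply/matrixP => i j; rewrite !mxE; apply: eq_bigr => l _.
by rewrite !mxE mulr_algr mulr_algl.
Qed.

Lemma trmx_mul_scall m p q (X : 'M[A]_(p, q)) (G : 'M[k]_(m, p)) :
  (sc G *m X)^T = X^T *m sc G^T.
Proof.
apply/matrixP => i j; rewrite !mxE; apply: eq_bigr => l _.
by rewrite !mxE mulr_algr mulr_algl.
Qed.

Lemma map_mx_mul_scalr (f : A -> k) m p q (X : 'M[A]_(m, p)) (G : 'M[k]_(p, q)) :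
  lin_form f -> map_mx f (X *m sc G) = map_mx f X *m G.
Proof.
move=> lf; apply/matrixP => i j; rewrite !mxE lin_form_sum //; apply: eq_bigr => l _.
by rewrite !mxE mulr_algr lin_formZ // mulrC.
Qed.

Lemma map_mx_mul_scall (f : A -> k) m p q (X : 'M[A]_(p, q)) (G : 'M[k]_(m, p)) :
  lin_form f -> map_mx f (sc G *m X) = G *m map_mx f X.
Proof.
move=> lf; apply/matrixP => i j; rewrite !mxE lin_form_sum //; apply: eq_bigr => l _.
by rewrite !mxE mulr_algl lin_formZ.
Qed.

Lemma map_mx_linear_mul_scalr (T : A -> A) m p q (X : 'M[A]_(m, p)) (G : 'M[k]_(p, q)) :
  linear T -> map_mx T (X *m sc G) = map_mx T X *m sc G.
Proof.
move=> linT; apply/matrixP => i j; rewrite !mxE (lin_sum linT); apply: eq_bigr => l _.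
by rewrite !mxE !mulr_algr (linZ linT).
Qed.

Lemma map_mx_linear_mul_scall (T : A -> A) m p q (X : 'M[A]_(p, q)) (G : 'M[k]_(m, p)) :
  linear T -> map_mx T (sc G *m X) = sc G *m map_mx T X.
Proof.
move=> linT; apply/matrixP => i j; rewrite !mxE (lin_sum linT); apply: eq_bigr => l _.
by rewrite !mxE !mulr_algl (linZ linT).
Qed.

Lemma intertwine_forms n (a b : 'M[A]_n) (G : 'M[k]_n) : a *m sc G = sc G *m b ->
  forall f, lin_form f -> map_mx f a *m G = G *m map_mx f b.
Proof. by move=> aGb f lf; rewrite -map_mx_mul_scalr // aGb map_mx_mul_scall. Qed.

Lemma intertwine_invmx n (a b : 'M[A]_n) (G : 'M[k]_n) : G \in unitmx ->
  a *m sc G = sc G *m b -> b *m sc (invmx G) = sc (invmx G) *m a.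
Proof.
move=> G_unit aGb.
have GV : sc G *m sc (invmx G) = 1%:M by rewrite -scal_mxM mulmxV // scal_mx1.
have VG : sc (invmx G) *m sc G = 1%:M by rewrite -scal_mxM mulVmx // scal_mx1.
by rewrite -[LHS]mul1mx -VG mulmxA -(mulmxA _ (sc G)) -aGb -!mulmxA GV mulmx1.
Qed.

End ScalarMatrices.

Section MatrixFacts.
Variable R : idomainType.

Lemma unitmx_neq0 n (M : 'M[R]_n) : (0 < n)%N -> M \in unitmx -> M != 0.
Proof. by case: n M => // n M _; apply: contraTneq => ->; rewrite unitmxE det0 unitr0. Qed.

Lemma mx_neq0_entry m p (M : 'M[R]_(m, p)) : M != 0 -> exists i j, M i j != 0.
Proof.
move=> M_neq0; apply: contra_neqP M_neq0 => all0; apply/matrixP => i j; rewrite mxE.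
by apply/eqP; apply: contraT => Mij; case: all0; exists i, j.
Qed.

Lemma trmx_eq_scale_sign n (M : 'M[R]_n) c : M != 0 -> M^T = c *: M -> c = 1 \/ c = -1.
Proof.
move=> M_neq0 MT.
have : (c ^+ 2 - 1) *: M == 0.
  by rewrite scalerBl scale1r expr2 -scalerA -MT -linearZ /= -MT trmxK subrr.
rewrite scalemx_eq0 (negPf M_neq0) orbF subr_eq0 sqrf_eq1.
by case/orP => /eqP ->; [left|right].
Qed.

End MatrixFacts.

Section SchurLemma.
Variables (k : fieldType) (A : algType k).
Local Notation sc := (scal_mx A).

Lemma simple_comod_morph_unitmx n (a b : 'M[A]_n) (G : 'M[k]_n) :
  simple_comod a -> G != 0 ->
  (forall f, lin_form f -> map_mx f a *m G = G *m map_mx f b) -> G \in unitmx.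
Proof.
move=> [_ simple_a] G_neq0 aGb.
have /simple_a/orP[/eqmx0P GT0|/andP[_]] : subcomod a G^T.
- by move=> f lf; rewrite -trmx_mul aGb // trmx_mul submxMl.
- by move: G_neq0; rewrite -[G]trmxK GT0 trmx0 eqxx.
- by rewrite -unitmx_tr -row_full_unit -sub1mx.
Qed.

End SchurLemma.

Section SchurLemmaClosed.
Variables (k : closedFieldType) (A : algType k).
Local Notation sc := (scal_mx A).

Lemma simple_comod_endo_scalar n (a : 'M[A]_n) (X : 'M[k]_n) :
  simple_comod a -> a *m sc X = sc X *m a -> exists c, X = c%:M.
Proof.
move=> simple_a /intertwine_forms aX.
have [c c_root] : exists c, root (char_poly X) c.
  by apply/closed_rootP; rewrite size_char_poly eqSS -lt0n; case: simple_a.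
exists c; apply/eqP; rewrite -subr_eq0.
have Y_nonunit : X - c%:M \notin unitmx.
  by rewrite -row_free_unit -kermx_eq0; rewrite -eigenvalue_root_char in c_root.
apply: contraNT Y_nonunit => Y_neq0.
apply: (simple_comod_morph_unitmx (b := a) simple_a Y_neq0) => f lf.
by rewrite mulmxBr mulmxBl aX // scalar_mxC.
Qed.

Lemma comod_iso_unique n (a b : 'M[A]_n) (F G : 'M[k]_n) :
  simple_comod a -> F \in unitmx -> b *m sc F = sc F *m a -> b *m sc G = sc G *m a ->
  exists c, G = c *: F.
Proof.
move=> simple_a F_unit isoF isoG.
have [c Xc] : exists c, invmx F *m G = c%:M.
  apply: simple_comod_endo_scalar simple_a _.
  by rewrite scal_mxM mulmxA (intertwine_invmx F_unit isoF) -(mulmxA _ b) isoG mulmxA.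
by exists c; rewrite -(mulKVmx F_unit G) Xc mul_mx_scalar.
Qed.

End SchurLemmaClosed.

Section HaarMatrices.
Variables (k : fieldType) (A : algType k).
Variables (D : A -> seq (A * A)) (eps : A -> k) (S : A -> A) (h : A -> k).
Hypotheses (hopfA : is_hopf D eps S) (haar_h : haar D h).
Local Notation sc := (scal_mx A).

Lemma coproductM_eval (W : lmodType k) (B : A -> A -> W) x y : bilin B ->
  tensor_eval B (D (x * y)) = \sum_(p <- D x) \sum_(q <- D y) B (p.1 * q.1) (p.2 * q.2).
Proof.
case: hopfA => _ _ multD _ _ bB.
rewrite (@tensor_eval_ext _ _ _ _ _ [seq (p.1 * q.1, p.2 * q.2) | p <- D x, q <- D y]) //.
  by rewrite /tensor_eval big_allpairs_dep.
by move=> f g lf lg; rewrite (multD f g lf lg).1 /pair2 big_allpairs_dep.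
Qed.

Lemma haar_alg c : h c%:A = c.
Proof. by case: haar_h => lin_h h1 _; rewrite lin_formZ // h1 mulr1. Qed.

Variables (n : nat) (a : 'M[A]_n).
Hypothesis comat : comatrix D eps a.

Lemma comatrix_eval (W : lmodType k) (B : A -> A -> W) i j : bilin B ->
  tensor_eval B (D (a i j)) = \sum_l B (a i l) (a l j).
Proof.
move=> bB; rewrite (@tensor_eval_ext _ _ _ _ _ [seq (a i l, a l j) | l <- index_enum 'I_n]) //.
  by rewrite /tensor_eval big_map.
by move=> f g lf lg; rewrite comat.1 // /pair2 big_map.
Qed.

Lemma comatrixM_eval (W : lmodType k) (B : A -> A -> W) i j m l : bilin B ->
  tensor_eval B (D (a i j * a m l)) =
  \sum_r \sum_s B (a i r * a m s) (a r j * a s l).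
Proof.
move=> bB; rewrite coproductM_eval //.
transitivity (\sum_(p <- D (a i j)) \sum_s B (p.1 * a m s) (p.2 * a s l)).
  by apply: eq_bigr => p _; exact: comatrix_eval (bilinear_premul _ _ bB).
rewrite exchange_big [RHS]exchange_big; apply: eq_bigr => s _.
exact: comatrix_eval (bilinear_postmul _ _ bB).
Qed.

Lemma antipode_comatrix : map_mx S a *m a = 1%:M.
Proof.
case: hopfA => _ _ _ _ [linS antipode]; apply/matrixP => i j.
have := comatrix_eval i j (bilinear_linear_mul linS).
rewrite /tensor_eval (antipode (a i j)).1 comat.2 !mxE => /esym eq_ij.
rewrite (eq_bigr (fun l => S (a i l) * a l j)) => [|l _]; last by rewrite mxE.
by rewrite eq_ij; case: (i == j); rewrite ?scale1r ?scale0r.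
Qed.

Definition haar_mx (i j : 'I_n) : 'M[k]_n := \matrix_(r, s) h (a r i * a s j).

Lemma haar_mx_invariant i j : a *m sc (haar_mx i j) *m a^T = sc (haar_mx i j).
Proof.
case: haar_h => lin_h _ haar_inv; apply/matrixP => m l.
rewrite !mxE; transitivity (tensor_eval (fun u v : A => h v *: u) (D (a m i * a l j))).
  rewrite (comatrixM_eval _ _ _ _ (bilinear_scale_form lin_h)) exchange_big.
  apply: eq_bigr => s _; rewrite !mxE mulr_suml; apply: eq_bigr => r _.
  by rewrite !mxE mulr_algr -scalerAl.
exact: (haar_inv _).1.
Qed.

Lemma dual_comatrixE : dual_comatrix S a = (map_mx S a)^T.
Proof. by apply/matrixP => i j; rewrite !mxE. Qed.

Lemma haar_mx_dual i j :
  a *m sc (haar_mx i j)^T = sc (haar_mx i j)^T *m dual_comatrix S a.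
Proof.
have : sc (haar_mx i j) *m a^T = map_mx S a *m sc (haar_mx i j).
  by rewrite -[in RHS](haar_mx_invariant i j) !mulmxA antipode_comatrix mul1mx.
by move/(congr1 trmx); rewrite trmx_mul_scall trmx_mul_scalr trmxK dual_comatrixE.
Qed.

Lemma nu2E : nu2 h a = \sum_i \sum_j haar_mx i j j i.
Proof. by apply: eq_bigr => i _; apply: eq_bigr => j _; rewrite mxE. Qed.

Lemma haar_mx_colinear_trace E i j c : colinear_form a E ->
  haar_mx i j = c *: invmx E -> c * \tr (E *m invmx E^T) = E i j.
Proof.
case: haar_h => lin_h _ _ colE Wc.
have Wc_rl r l : h (a r i * a l j) = c * invmx E r l.
  by have := congr1 (fun M : 'M[k]_n => M r l) Wc; rewrite !mxE.
have <- : h ((a^T *m sc E *m a) i j) = E i j by rewrite colE /scal_mx mxE haar_alg.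
rewrite mxE lin_form_sum // /mxtrace mulr_sumr.
transitivity (\sum_r \sum_l c * (E r l * invmx E r l)).
  apply: eq_bigr => r _; rewrite mxE mulr_sumr; apply: eq_bigr => l _.
  by rewrite -trmx_inv mxE.
rewrite exchange_big; apply: eq_bigr => l _.
rewrite mxE mulr_suml lin_form_sum //; apply: eq_bigr => r _.
by rewrite !mxE mulr_algr -scalerAl lin_formZ // Wc_rl mulrCA.
Qed.

Lemma dual_iso_tr F : dual_comatrix S a *m sc F = sc F *m a ->
  sc F^T *m map_mx S a = a^T *m sc F^T.
Proof.
by move/(congr1 trmx); rewrite trmx_mul_scalr trmx_mul_scall dual_comatrixE trmxK.
Qed.

Lemma dual_iso_colinear F : dual_comatrix S a *m sc F = sc F *m a -> colinear_form a F^T.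
Proof.
by move/dual_iso_tr => isoF; rewrite /colinear_form -isoF -mulmxA antipode_comatrix mulmx1.
Qed.

Lemma dual_iso_trmx F : (forall x, S (S x) = x) ->
  dual_comatrix S a *m sc F = sc F *m a -> dual_comatrix S a *m sc F^T = sc F^T *m a.
Proof.
case: hopfA => _ _ _ _ [linS _] S_inv /dual_iso_tr /(congr1 (map_mx S)).
rewrite map_mx_linear_mul_scall // map_mx_linear_mul_scalr // dual_comatrixE map_trmx.
by have -> : map_mx S (map_mx S a) = a by apply/matrixP => i j; rewrite !mxE S_inv.
Qed.

Hypothesis simple_a : simple_comod a.

Lemma nu2_not_self_dual : ~ self_dual S a -> nu2 h a = 0.
Proof.
apply: contra_notP => /eqP nu2_neq0.
have [i [j W_neq0]] : exists i j, haar_mx i j != 0.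
  apply: contra_neqP nu2_neq0 => all0; rewrite nu2E big1 // => i _; rewrite big1 // => j _.
  suff -> : haar_mx i j = 0 by rewrite mxE.
  by apply/eqP; apply: contraT => W_neq0; case: all0; exists i, j.
have WT_unit : (haar_mx i j)^T \in unitmx.
  apply: simple_comod_morph_unitmx simple_a _ (intertwine_forms (haar_mx_dual i j)).
  by rewrite -trmx0 (inj_eq trmx_inj).
exists (invmx (haar_mx i j)^T); split; first by rewrite unitmx_inv.
exact: intertwine_invmx WT_unit (haar_mx_dual i j).
Qed.

End HaarMatrices.

Section SchurIndicator.
Variables (k : closedFieldType) (A : algType k).
Variables (D : A -> seq (A * A)) (eps : A -> k) (S : A -> A) (h : A -> k).
Hypotheses (hopfA : is_hopf D eps S) (haar_h : haar D h).
Variables (n : nat) (a : 'M[A]_n).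
Hypotheses (comat : comatrix D eps a) (simple_a : simple_comod a).
Local Notation sc := (scal_mx A).

Lemma haar_mx_colinear E i j : E \in unitmx -> colinear_form a E ->
  exists c, haar_mx h a i j = c *: invmx E.
Proof.
move=> E_unit colE.
have [c WEc] : exists c, haar_mx h a i j *m E = c%:M.
  apply: simple_comod_endo_scalar simple_a _.
  rewrite scal_mxM -[in X in _ *m (_ *m X)]colE !mulmxA.
  by rewrite (haar_mx_invariant hopfA haar_h comat).
by exists c; rewrite -[haar_mx _ _ _ _](mulmxK E_unit) WEc mul_scalar_mx.
Qed.

Lemma nu2_colinear E : E \in unitmx -> colinear_form a E ->
  \tr (E *m invmx E^T) != 0 /\ nu2 h a = n%:R / \tr (E *m invmx E^T).
Proof.
move=> E_unit colE.
have [i0 [j0 Eij0]] := mx_neq0_entry (unitmx_neq0 simple_a.1 E_unit).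
have tr_neq0 : \tr (E *m invmx E^T) != 0.
  have [c Wc] := haar_mx_colinear i0 j0 E_unit colE.
  apply: contra_neq Eij0 => tr0.
  by rewrite -(haar_mx_colinear_trace haar_h colE Wc) tr0 mulr0.
have Wc i j : haar_mx h a i j = (E i j / \tr (E *m invmx E^T)) *: invmx E.
  have [c Wc] := haar_mx_colinear i j E_unit colE.
  by rewrite Wc -(haar_mx_colinear_trace haar_h colE Wc) mulfK.
split=> //; rewrite nu2E -mxtrace1 -(mulmxV E_unit) /mxtrace mulr_suml.
apply: eq_bigr => i _; rewrite mxE mulr_suml; apply: eq_bigr => j _.
by rewrite Wc !mxE mulrAC.
Qed.

Lemma nu2_colinear_trmx_scale E c : n%:R != 0 :> k ->
  E \in unitmx -> colinear_form a E -> E^T = c *: E -> nu2 h a = c.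
Proof.
move=> n_neq0 E_unit colE ET; have [_ ->] := nu2_colinear E_unit colE.
have c_neq0 : c != 0.
  apply: contraTneq E_unit => c0; rewrite -unitmx_tr ET c0 scale0r.
  by apply/negP => /(unitmx_neq0 simple_a.1); rewrite eqxx.
rewrite ET invmxZ -?ET ?unitmx_tr // -scalemxAr mxtraceZ mulmxV // mxtrace1.
by rewrite invfM invrK mulrCA mulfV // mulr1.
Qed.

Lemma self_dual_colinear_sign : self_dual S a -> (forall x, S (S x) = x) ->
  exists E c, [/\ E \in unitmx, colinear_form a E, E^T = c *: E & c = 1 \/ c = -1].
Proof.
move=> [F [F_unit isoF]] S_inv.
have FT_unit : F^T \in unitmx by rewrite unitmx_tr.
have isoFT := dual_iso_trmx hopfA S_inv isoF.
have [c Fc] := comod_iso_unique simple_a FT_unit isoFT isoF.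
have FTc : F^T^T = c *: F^T by rewrite trmxK.
have colFT := dual_iso_colinear hopfA comat isoF.
exists F^T, c; split=> //.
exact: trmx_eq_scale_sign (unitmx_neq0 simple_a.1 FT_unit) FTc.
Qed.

End SchurIndicator.

Theorem theorem6 (k : closedFieldType) (A : algType k)
    (D : A -> seq (A * A)) (eps : A -> k) (S : A -> A) (h : A -> k) :
  [pchar k] =i pred0 ->
  is_hopf D eps S -> cosemisimple D eps -> haar D h ->
  forall (n : nat) (a : 'M[A]_n), comatrix D eps a -> simple_comod a ->
  [/\ (~ self_dual S a -> nu2 h a = 0),
      (self_dual S a -> forall E : 'M[k]_n, E \in unitmx -> colinear_form a E ->
         \tr (E *m invmx E^T) != 0 /\ nu2 h a = n%:R / \tr (E *m invmx E^T)) &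
      (self_dual S a -> (forall x, S (S x) = x) ->
         [/\ nu2 h a = 1 \/ nu2 h a = -1,
             nu2 h a = 1 <-> (exists E : 'M[k]_n,
                [/\ E \in unitmx, colinear_form a E & E^T = E]) &
             nu2 h a = -1 <-> (exists E : 'M[k]_n,
                [/\ E \in unitmx, colinear_form a E & E^T = - E])])].
Proof.
move=> char0 hopfA _ haar_h n a comat simple_a; split.
- exact: (nu2_not_self_dual hopfA haar_h comat simple_a).
- by move=> _ E; exact: (nu2_colinear hopfA haar_h comat simple_a).
move=> a_self_dual S_inv.
have n_neq0 : n%:R != 0 :> k by rewrite (pcharf0P k).1 // -lt0n; case: simple_a.
have nu2_sign E c : E \in unitmx -> colinear_form a E -> E^T = c *: E -> nu2 h a = c.
  exact: (nu2_colinear_trmx_scale hopfA haar_h comat simple_a n_neq0).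
have [E [c [E_unit colE ET c_sign]]] :=
  self_dual_colinear_sign hopfA comat simple_a a_self_dual S_inv.
have nu2c := nu2_sign E c E_unit colE ET.
split; first by rewrite nu2c.
- split=> [nu2_1|[E' [E'_unit colE' E'T]]].
    by exists E; split=> //; rewrite ET -nu2c nu2_1 scale1r.
  by apply: nu2_sign E'_unit colE' _; rewrite scale1r.
- split=> [nu2_N1|[E' [E'_unit colE' E'T]]].
    by exists E; split=> //; rewrite ET -nu2c nu2_N1 scaleN1r.
  by apply: nu2_sign E'_unit colE' _; rewrite scaleN1r.
Qed.
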